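(* Let $\mathbb{C}$ be a category and $G:\mathbb{C}\times\mathbb{C}\to\mathbb{C}$ a functor. For all codes $\gamma,\gamma':\mathrm{IR}^+(\mathbb{C})$ and every $C\in\mathrm{Fam}(\mathbb{C})$, $[\![\gamma\times_G\gamma']\!]C\cong\big([\![\gamma]\!]_0C\times[\![\gamma']\!]_0C,\ (s,s')\mapsto G([\![\gamma]\!]_1C\,s,\ [\![\gamma']\!]_1C\,s')\big)$.
   Context: For a category $\mathbb{C}$, $\mathrm{Fam}(\mathbb{C})$ has objects $(X,P)$ with $X$ a set and $P:X\to\mathbb{C}$; morphisms $(h,k)$ with $h:X\to Y$, $k_x:P(x)\to Q(h(x))$; coproducts $\sum_a(X_a,P_a)=(\sum_aX_a,[P_a]_a)$. Codes of $\mathrm{IR}^+(\mathbb{C})$: $\iota c$, $\sigma_Af$ ($f:A\to\mathrm{IR}^+(\mathbb{C})$), $\delta_AF$ ($F:(A\to\mathbb{C})\to\mathrm{IR}^+(\mathbb{C})$ a functor, $A\to\mathbb{C}$ the category of $A$-indexed families with pointwise morphisms); codes form a category with morphisms of codes. Interpretation on objects: $[\![\iota c]\!](X,P)=(1,\lambda\_.c)$; $[\![\sigma_Af]\!](X,P)=\sum_{a:A}[\![f a]\!](X,P)$; $[\![\delta_AF]\!](X,P)=\sum_{g:A\to X}[\![F(P\circ g)]\!](X,P)$; we write $[\![\gamma]\!]C=([\![\gamma]\!]_0C,[\![\gamma]\!]_1C)$. Substitution: for $c\in\mathbb{C}$ and a code, $(\iota c')[\iota x\mapsto\iota G(c,x)]=\iota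 G(c,c')$, $(\sigma_Af)[\ldots]=\sigma_A(\lambda a.f(a)[\ldots])$, $(\delta_AF)[\ldots]=\delta_A(\lambda h.F(h)[\ldots])$. Product: $(\iota c)\times_G\gamma=\gamma[\iota x\mapsto\iota G(c,x)]$, $(\sigma_Af)\times_G\gamma=\sigma_A(\lambda a.f(a)\times_G\gamma)$, $(\delta_AF)\times_G\gamma=\delta_A(\lambda h.F(h)\times_G\gamma)$. These operations are extended simultaneously to morphisms of codes so that they are functorial, ensuring the $\delta$ clauses yield functors and hence well-formed codes. *)

Set Implicit Arguments.
Set Universe Polymorphism.

Record Category : Type := {
  Obj : Type;
  Hom : Obj -> Obj -> Type;
  idm : forall a, Hom a a;
  comp : forall a b c, Hom b c -> Hom a b -> Hom a c;
  comp_id_l : forall a b (f : Hom a b), comp (idm b) f = f;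
  comp_id_r : forall a b (f : Hom a b), comp f (idm a) = f;
  comp_assoc : forall a b c d (h : Hom c d) (g : Hom b c) (f : Hom a b),
      comp h (comp g f) = comp (comp h g) f
}.
Arguments idm {C} a : rename.
Arguments comp {C a b c} _ _ : rename.

Definition ProdCat (C D : Category) : Category.
Proof.
  refine {| Obj := (Obj C * Obj D)%type;
            Hom := fun x y => (Hom C (fst x) (fst y) * Hom D (snd x) (snd y))%type;
            idm := fun x => (idm (fst x), idm (snd x));
            comp := fun x y z g f => (comp (fst g) (fst f), comp (snd g) (snd f)) |}.
  - intros [a1 a2] [b1 b2] [f1 f2]; simpl; now rewrite !comp_id_l.
  - intros [a1 a2] [b1 b2] [f1 f2]; simpl; now rewrite !comp_id_r.
  - intros ? ? ? ? [h1 h2] [g1 g2] [f1 f2]; simpl; now rewrite !comp_assoc.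
Defined.

Record Functor (C D : Category) : Type := {
  fobj :> Obj C -> Obj D;
  fmap : forall a b, Hom C a b -> Hom D (fobj a) (fobj b);
  fmap_id : forall a, fmap _ _ (@idm C a) = @idm D (fobj a);
  fmap_comp : forall a b c (g : Hom C b c) (f : Hom C a b),
      fmap _ _ (@comp C a b c g f) = @comp D _ _ _ (fmap _ _ g) (fmap _ _ f)
}.

Record FamObj (C : Category) : Type := mkFam {
  fam_idx : Type;
  fam_fun : fam_idx -> Obj C
}.

Record FamHom (C : Category) (A B : FamObj C) : Type := mkFamHom {
  fam_h : fam_idx A -> fam_idx B;
  fam_k : forall x : fam_idx A, Hom C (fam_fun A x) (fam_fun B (fam_h x))
}.

Definition fam_id (C : Category) (A : FamObj C) : FamHom A A :=
  @mkFamHom C A A (fun x => x) (fun x => idm (fam_fun A x)).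

Definition fam_comp (C : Category) (A B D : FamObj C)
  (g : FamHom B D) (f : FamHom A B) : FamHom A D :=
  @mkFamHom C A D (fun x => fam_h g (fam_h f x))
            (fun x => comp (fam_k g (fam_h f x)) (fam_k f x)).

Definition FamIso (C : Category) (A B : FamObj C) : Prop :=
  exists (f : FamHom A B) (g : FamHom B A),
    fam_comp g f = fam_id A /\ fam_comp f g = fam_id B.

Definition fam_sum (C : Category) (I : Type) (F : I -> FamObj C) : FamObj C :=
  @mkFam C {i : I & fam_idx (F i)} (fun p => fam_fun (F (projT1 p)) (projT2 p)).

(** * Codes of IR^+(C)
    The paper defines codes and morphisms of codes simultaneously
    (induction-recursion/induction-induction); in delta_A F the argument F is
    required to be a functor (A -> C) -> IR^+(C).  Rocq has no
    induction-recursion, so we keep only the object part of F. *)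
Inductive code (C : Category) : Type :=
| iota : Obj C -> code C
| sigma : forall A : Type, (A -> code C) -> code C
| delta : forall A : Type, ((A -> Obj C) -> code C) -> code C.
Arguments iota {C} _.
Arguments sigma {C} A _.
Arguments delta {C} A _.

Fixpoint interp (C : Category) (g : code C) (Y : FamObj C) : FamObj C :=
  match g with
  | iota c => @mkFam C unit (fun _ => c)
  | sigma A f => fam_sum (fun a => interp (f a) Y)
  | delta A F =>
      fam_sum (fun h : A -> fam_idx Y => interp (F (fun a => fam_fun Y (h a))) Y)
  end.

Definition interp0 (C : Category) (g : code C) (Y : FamObj C) : Type :=
  fam_idx (interp g Y).
Definition interp1 (C : Category) (g : code C) (Y : FamObj C) :
  interp0 g Y -> Obj C := fam_fun (interp g Y).

Fixpoint subst (C : Category) (G : Functor (ProdCat C C) C) (c : Obj C)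
  (g : code C) : code C :=
  match g with
  | iota c' => iota (G (c, c'))
  | sigma A f => sigma A (fun a => subst G c (f a))
  | delta A F => delta A (fun h => subst G c (F h))
  end.

Fixpoint prod_code (C : Category) (G : Functor (ProdCat C C) C)
  (g g' : code C) : code C :=
  match g with
  | iota c => subst G c g'
  | sigma A f => sigma A (fun a => prod_code G (f a) g')
  | delta A F => delta A (fun h => prod_code G (F h) g')
  end.

(** The index set of [γ ×_G γ'] unfolds along [γ] exactly as the index set of
    [γ], and at each [ι c] leaf it becomes the index set of [γ'] relabelled by
    [G(c, -)]; so both sides are iterated coproducts over the same data.  The
    isomorphism is therefore a bijection of index types under which the two
    families agree on the nose ("strict" isomorphism), built by induction on
    [γ] from closure of strict isomorphisms under composition and coproducts,
    the reassociation [Σ_i (X_i × Z) ≅ (Σ_i X_i) × Z] and [Z ≅ 1 × Z].  A strict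
    isomorphism gives an isomorphism of [Fam(C)] by transporting identities
    along the fibrewise equalities. *)

From Stdlib Require Import FunctionalExtensionality Eqdep.
Set Implicit Arguments.

Section StrictIso.

Variable C : Category.

Record strict_iso (A B : FamObj C) : Type := {
  siso_fwd : fam_idx A -> fam_idx B;
  siso_bwd : fam_idx B -> fam_idx A;
  siso_fwdK : forall x, siso_bwd (siso_fwd x) = x;
  siso_bwdK : forall y, siso_fwd (siso_bwd y) = y;
  siso_fun : forall x, fam_fun B (siso_fwd x) = fam_fun A x
}.

Definition hom_of_eq (a b : Obj C) (e : a = b) : Hom C a b :=
  match e in _ = b' return Hom C a b' with eq_refl => idm a end.

Lemma hom_of_eq_trans (a b c : Obj C) (e1 : a = b) (e2 : b = c) :
  comp (hom_of_eq e2) (hom_of_eq e1) = hom_of_eq (eq_trans e1 e2).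
Proof. destruct e1, e2; apply comp_id_l. Qed.

Lemma famhom_transport_id (A : FamObj C) (u : fam_idx A -> fam_idx A)
    (E : forall x, fam_fun A x = fam_fun A (u x))
    (k : forall x, Hom C (fam_fun A x) (fam_fun A (u x))) :
  (forall x, k x = hom_of_eq (E x)) -> (forall x, u x = x) ->
  @mkFamHom C A A u k = fam_id A.
Proof.
  intros Hk Hu.
  assert (k = fun x => hom_of_eq (E x)) as -> by
    (apply functional_extensionality_dep; exact Hk).
  assert (u = fun x => x) as -> by (apply functional_extensionality; exact Hu).
  unfold fam_id; f_equal; apply functional_extensionality_dep; intro x.
  (* [E x] now proves [fam_fun A x = fam_fun A x], hence is [eq_refl] by UIP. *)
  now rewrite (UIP_refl _ _ (E x)).
Qed.

Lemma strict_iso_FamIso (A B : FamObj C) : strict_iso A B -> FamIso A B.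
Proof.
  intros [h g gh hg e].
  exists (@mkFamHom C A B h (fun x => hom_of_eq (eq_sym (e x)))).
  exists (@mkFamHom C B A g (fun y =>
            hom_of_eq (eq_trans (f_equal (fam_fun B) (eq_sym (hg y))) (e (g y))))).
  split; unfold fam_comp; simpl.
  - eapply famhom_transport_id; [intro; apply hom_of_eq_trans | exact gh].
  - eapply famhom_transport_id; [intro; apply hom_of_eq_trans | exact hg].
Qed.

Definition strict_iso_trans (A B D : FamObj C) :
  strict_iso A B -> strict_iso B D -> strict_iso A D.
Proof.
  intros [h g gh hg e] [h' g' gh' hg' e'].
  refine {| siso_fwd := fun x => h' (h x); siso_bwd := fun y => g (g' y) |}.
  - intro x; now rewrite gh'.
  - intro y; now rewrite hg.
  - intro x; now rewrite e'.
Defined.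

Definition strict_iso_sum {I : Type} {F F' : I -> FamObj C} :
  (forall i, strict_iso (F i) (F' i)) -> strict_iso (fam_sum F) (fam_sum F').
Proof.
  intros S.
  refine (@Build_strict_iso (fam_sum F) (fam_sum F')
    (fun p : {i : I & fam_idx (F i)} =>
       existT _ (projT1 p) (siso_fwd (S (projT1 p)) (projT2 p)))
    (fun p : {i : I & fam_idx (F' i)} =>
       existT _ (projT1 p) (siso_bwd (S (projT1 p)) (projT2 p))) _ _ _).
  - intros [i x]; cbn; f_equal; apply siso_fwdK.
  - intros [i x]; cbn; f_equal; apply siso_bwdK.
  - intros [i x]; exact (siso_fun (S i) x).
Defined.

Definition fam_sum_prod_assoc {I : Type} {X : I -> Type} {Z : Type}
    (H : forall i, X i -> Z -> Obj C) :
  strict_iso (fam_sum (fun i => @mkFam C (X i * Z)%type (fun p => H i (fst p) (snd p))))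
             (@mkFam C ({i : I & X i} * Z)%type
                    (fun p => H (projT1 (fst p)) (projT2 (fst p)) (snd p))).
Proof.
  refine (@Build_strict_iso
    (fam_sum (fun i => @mkFam C (X i * Z)%type (fun p => H i (fst p) (snd p))))
    (@mkFam C ({i : I & X i} * Z)%type (fun p => H (projT1 (fst p)) (projT2 (fst p)) (snd p)))
    (fun p : {i : I & (X i * Z)%type} =>
       (existT X (projT1 p) (fst (projT2 p)), snd (projT2 p)))
    (fun p : ({i : I & X i} * Z)%type =>
       existT (fun i => (X i * Z)%type) (projT1 (fst p)) (projT2 (fst p), snd p))
    _ _ _).
  - now intros [i [x z]].
  - now intros [[i x] z].
  - now intros [i [x z]].
Defined.

Definition unit_prod_strict_iso {Z : Type} (H : Z -> Obj C) :
  strict_iso (@mkFam C Z H) (@mkFam C (unit * Z)%type (fun p => H (snd p))).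
Proof.
  refine (@Build_strict_iso (@mkFam C Z H) (@mkFam C (unit * Z)%type (fun p => H (snd p)))
    (fun z : Z => (tt, z)) (fun p : (unit * Z)%type => snd p)
                            _ _ _).
  - reflexivity.
  - now intros [[] z].
  - reflexivity.
Defined.

Variable G : Functor (ProdCat C C) C.
Variable Y : FamObj C.

Definition interp_subst_strict_iso (c : Obj C) (g' : code C) :
  strict_iso (interp (subst G c g') Y)
             (@mkFam C (interp0 g' Y) (fun s => G (c, interp1 g' Y s))).
Proof.
  induction g' as [c' | A f IH | A F IH]; simpl.
  - refine {| siso_fwd := fun x => x; siso_bwd := fun x => x |}; reflexivity.
  - exact (strict_iso_sum IH).
  - exact (strict_iso_sum (fun h => IH _)).
Defined.

Definition interp_prod_code_strict_iso (g g' : code C) :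
  strict_iso (interp (prod_code G g g') Y)
             (@mkFam C (interp0 g Y * interp0 g' Y)%type
                    (fun s => G (interp1 g Y (fst s), interp1 g' Y (snd s)))).
Proof.
  induction g as [c | A f IH | A F IH]; simpl.
  - exact (strict_iso_trans (interp_subst_strict_iso c g')
                            (unit_prod_strict_iso _)).
  - exact (strict_iso_trans (strict_iso_sum IH)
             (fam_sum_prod_assoc (fun a x z => G (interp1 (f a) Y x, interp1 g' Y z)))).
  - exact (strict_iso_trans (strict_iso_sum (fun h => IH _))
             (fam_sum_prod_assoc (fun h x z =>
                G (interp1 (F (fun a => fam_fun Y (h a))) Y x, interp1 g' Y z)))).
Defined.

End StrictIso.

Theorem lemma5p5 :
  forall (C : Category) (G : Functor (ProdCat C C) C) (g g' : code C)
         (Y : FamObj C),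
    FamIso (interp (prod_code G g g') Y)
           (@mkFam C (interp0 g Y * interp0 g' Y)%type
                   (fun s => G (interp1 g Y (fst s), interp1 g' Y (snd s)))).
Proof.
  intros C G g g' Y.
  apply strict_iso_FamIso, interp_prod_code_strict_iso.
Qed.
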